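(* Let $\mathcal O_5$ be the family of outerplanar graphs with girth at least $5$. Then every push graph whose underlying graph belongs to $\mathcal O_5$ admits a homomorphism to the directed $3$-cycle $\vec C_3$, and $\chi_p(\mathcal O_5)=3$.
   Context: An oriented graph is a directed graph with no loops and no pair of opposite arcs; an orientation of an undirected simple graph $G$ is an oriented graph obtained by orienting each edge of $G$. A homomorphism of an oriented graph $\vec G$ to an oriented graph $\vec H$ is a map $\varphi:V(\vec G)\to V(\vec H)$ with $\varphi(u)\varphi(v)$ an arc of $\vec H$ whenever $uv$ is an arc of $\vec G$. To push a vertex means to reverse all arcs incident with it. The push graph $[\vec G]$ is the set of oriented graphs obtainable from $\vec G$ by pushing some set of vertices (its presentations); its underlying graph is the common underlying graph of its presentations. A push graph $[\vec G]$ admits a homomorphism to an oriented graph $\vec H$ if some presentation of $[\vec G]$ does. The push chromatic number $\chi_p([\vec G])$ is the minimum number of vertices of an oriented graph $\vec H$ with $[\vec G]\to\vec H$; for an undirected graph $G$, $\chi_p(G)$ is the maximum of $\chi_p([\vec G])$ over all orientations $\vec G$ of $G$; for a family $\mathcal F$, $\chi_p(\mathcal F)$ is the maximum of $\chi_p(G)$ over $G\in\mathcal F$. The girth of a graph is the length of its shortest cycle (infinite for forests). *)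

From mathcomp Require Import all_boot.
Set Implicit Arguments. Unset Strict Implicit. Unset Printing Implicit Defensive.

Definition simple_graph (T : finType) (e : rel T) : Prop :=
  irreflexive e /\ symmetric e.

Definition girth_ge (T : finType) (e : rel T) (g : nat) : Prop :=
  forall s : seq T, uniq s -> 3 <= size s -> cycle e s -> g <= size s.

(* Outerplanar: vertices can be placed (injectively) in convex/circular
   position so that edges, drawn as chords, do not cross. *)
Definition outerplanar (T : finType) (e : rel T) : Prop :=
  exists f : T -> nat, injective f /\
    forall x y u v, e x y -> e u v -> ~~ ((f x < f u) && (f u < f y) && (f y < f v)).

Definition in_O5 (T : finType) (e : rel T) : Prop :=
  simple_graph e /\ outerplanar e /\ girth_ge e 5.

Definition oriented (T : finType) (a : rel T) : Prop :=
  forall x y, a x y -> a y x -> False.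
Definition oriented_graph (T : finType) (a : rel T) : Prop :=
  irreflexive a /\ oriented a.

Definition orientation (T : finType) (a e : rel T) : Prop :=
  oriented_graph a /\ forall x y, e x y = a x y || a y x.

Definition push (T : finType) (a : rel T) (S : {set T}) : rel T :=
  fun x y => if (x \in S) (+) (y \in S) then a y x else a x y.

Definition hom (T U : finType) (a : rel T) (b : rel U) (phi : T -> U) : Prop :=
  forall x y, a x y -> b (phi x) (phi y).

(* The push graph [a] admits a homomorphism to b: some presentation does. *)
Definition push_hom (T U : finType) (a : rel T) (b : rel U) : Prop :=
  exists (S : {set T}) (phi : T -> U), hom (push a S) b phi.

Definition C3 : rel 'I_3 := fun i j => (j : nat) == (i.+1 %% 3).

Definition push_colorable (T : finType) (a : rel T) (n : nat) : Prop :=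
  exists H : rel 'I_n, oriented_graph H /\ push_hom a H.

Definition push_chromatic_number (T : finType) (a : rel T) (k : nat) : Prop :=
  push_colorable a k /\ forall n, n < k -> ~ push_colorable a n.

Definition family_push_chromatic_number
    (F : forall T : finType, rel T -> Prop) (k : nat) : Prop :=
  (forall (T : finType) (e a : rel T), F T e -> orientation a e ->
      push_colorable a k) /\
  (exists (T : finType) (e a : rel T), F T e /\ orientation a e /\
      push_chromatic_number a k).

From mathcomp Require Import all_boot zify.
Set Implicit Arguments. Unset Strict Implicit. Unset Printing Implicit Defensive.

(* A push graph maps to C3 iff its vertices can be given states (i, b), meaning
   "sent to i, pushed iff b", that respect every arc.  In a minimal counterexample
   every vertex has two neighbours, since a vertex of degree at most one can always
   be coloured last.  Ordering the vertices along the outer face, an innermost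
   chord xy with vertices between its ends spans a path of degree-2 vertices, and
   girth 5 forces at least three of them: this gives a thread of four degree-2
   vertices, or of three whose ends x and y are adjacent.  Along a walk the colour
   changes by +-1 at each edge, and the signs are free up to a parity fixed by the
   orientations and the states of the ends; five signs reach every residue mod 3
   and four every nonzero residue, so the thread can be removed and recoloured.
   The directed 5-cycle lies in O_5 and is not bipartite, so it needs 3 colours. *)

Section Thread.
Variables (T : finType) (e : rel T).

Definition adj_only (A : {set T}) (v p q : T) : Prop :=
  forall t, t \in A -> e v t -> t = p \/ t = q.

Fixpoint links (A : {set T}) (x : T) (vs : seq T) (w : T) : Prop :=
  if vs is v :: vs' then adj_only A v x (head w vs') /\ links A v vs' w else True.

Definition thread (A : {set T}) (x : T) (vs : seq T) (w : T) : Prop :=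
  [/\ uniq (x :: rcons vs w), {subset x :: rcons vs w <= A} & links A x vs w].

Lemma thread_ends (A : {set T}) x vs w : thread A x vs w ->
  x \in A :\: [set z in vs] /\ w \in A :\: [set z in vs].
Proof.
case=> + sub _; rewrite cons_uniq rcons_uniq mem_rcons inE negb_or.
move=> /andP[/andP[_ x_out] /andP[w_out _]].
by rewrite !inE x_out w_out !sub // !inE mem_rcons ?mem_head ?eqxx ?orbT.
Qed.

End Thread.

Definition state := ('I_3 * bool)%type.

Definition arc_ok (p q : state) : bool :=
  if p.2 (+) q.2 then C3 q.1 p.1 else C3 p.1 q.1.

Definition edge_ok (d : bool) (p q : state) : bool :=
  if d then arc_ok p q else arc_ok q p.

(* Unlike [enum state], this list reduces under [vm_compute]. *)
Definition states : seq state :=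
  [seq (i, b) | i <- [:: Ordinal (isT : 0 < 3); Ordinal (isT : 1 < 3); Ordinal (isT : 2 < 3)],
                b <- [:: false; true]].

Lemma mem_states p : p \in states.
Proof. by case: p => [[[|[|[|//]]] ?] []]. Qed.

Fixpoint reach (ds : seq bool) (p : state) : seq state :=
  if ds is d :: ds' then flatten [seq reach ds' q | q <- states & edge_ok d p q]
  else [:: p].

Lemma mem_reach_cons d ds p r :
  reflect (exists2 q, edge_ok d p q & r \in reach ds q) (r \in reach (d :: ds) p).
Proof.
apply: (iffP flatten_mapP) => [[q] | [q pq rq]].
  by rewrite mem_filter => /andP[pq _] rq; exists q.
by exists q; rewrite // mem_filter pq mem_states.
Qed.

Fixpoint bool_seqs (n : nat) : seq (seq bool) :=
  if n is n'.+1 then [seq b :: ds | b <- [:: false; true], ds <- bool_seqs n']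
  else [:: [::]].

Lemma mem_bool_seqs ds : ds \in bool_seqs (size ds).
Proof.
elim: ds => [|d ds IHds] //.
by apply/allpairsP; exists (d, ds); case: d.
Qed.

Lemma reach_size5 ds p r : size ds = 5 -> r \in reach ds p.
Proof.
have : all (fun ds => all (fun p => all (mem (reach ds p)) states) states) (bool_seqs 5).
  by vm_compute.
move=> + ds5; rewrite -ds5.
by move=> /allP/(_ _ (mem_bool_seqs ds))/allP/(_ _ (mem_states p))/allP/(_ _ (mem_states r)).
Qed.

Lemma reach_size4_closed d ds p r : size ds = 4 -> edge_ok d p r -> r \in reach ds p.
Proof.
have : all (fun dds => if dds is d :: ds then all (fun p => all (fun r =>
         edge_ok d p r ==> (r \in reach ds p)) states) states else true) (bool_seqs 5).
  by vm_compute.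
move=> + ds4; rewrite -ds4 => /allP/(_ _ (mem_bool_seqs (d :: ds))).
by move=> /allP/(_ _ (mem_states p))/allP/(_ _ (mem_states r))/implyP.
Qed.

Lemma edge_ok_total d p : exists q, edge_ok d p q.
Proof.
by have /mem_reach_cons[q pq _] := @reach_size5 [:: d; d; d; d; d] p p erefl; exists q.
Qed.

Section Coloring.
Variables (T : finType) (e a : rel T).

Definition c3_coloring (B : {set T}) (c : T -> state) : Prop :=
  {in B &, forall x y, a x y -> arc_ok (c x) (c y)}.

Hypothesis a_orients_e : orientation a e.

Lemma edge_ok_sym u v p q : e u v -> edge_ok (a u v) p q = edge_ok (a v u) q p.
Proof.
have [[_ a_or] e_a] := a_orients_e.
rewrite e_a /edge_ok; case uv: (a u v); case vu: (a v u) => //= _.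
by case: (a_or u v).
Qed.

Lemma c3_coloring_edge_ok (B : {set T}) c x y :
  c3_coloring B c -> x \in B -> y \in B -> e x y -> edge_ok (a x y) (c x) (c y).
Proof.
move=> cB xB yB; rewrite a_orients_e.2 /edge_ok.
by case: ifP => [xy _ | _ /= yx]; apply: cB.
Qed.

Lemma c3_coloring_add (B : {set T}) c v (q : state) : v \notin B -> c3_coloring B c ->
    (forall z, z \in B -> e v z -> edge_ok (a z v) (c z) q) ->
  c3_coloring (v |: B) [eta c with v |-> q].
Proof.
have [[a_irr a_or] e_a] := a_orients_e.
move=> vB cB v_ok x y; rewrite !inE /=.
have neq_v z : z \in B -> (z == v) = false by move=> zB; apply: contraNF vB => /eqP <-.
case/orP=> [/eqP-> | xB]; case/orP=> [/eqP-> | yB] xy.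
- by rewrite a_irr in xy.
- rewrite eqxx neq_v //; have := v_ok y yB; rewrite e_a xy /edge_ok => /(_ isT).
  by case: ifP => // yv; case: (a_or _ _ xy yv).
- by rewrite eqxx neq_v //; have := v_ok x xB; rewrite e_a xy orbT => /(_ isT).
- by rewrite !neq_v //; apply: cB.
Qed.

Lemma c3_coloring_add_leaf (A : {set T}) c v : v \in A ->
    (forall z1 z2, z1 \in A -> z2 \in A -> e v z1 -> e v z2 -> z1 = z2) ->
    c3_coloring (A :\ v) c ->
  exists c', c3_coloring A c'.
Proof.
move=> vA v_leaf cA; rewrite -(setD1K vA).
have vnA : v \notin A :\ v by rewrite !inE eqxx.
have subA : {subset A :\ v <= A} by apply/subsetP/subD1set.
case: (pickP [pred u | (u \in A :\ v) && e v u]) => [u /andP[uA vu] | no_nbr].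
- have [q uq] := edge_ok_total (a u v) (c u).
  exists [eta c with v |-> q]; apply: c3_coloring_add => // z zA vz.
  by rewrite (v_leaf z u) ?subA.
- exists [eta c with v |-> c v]; apply: c3_coloring_add => // z zA vz.
  by have := no_nbr z; rewrite /= zA vz.
Qed.

Lemma c3_coloring_add_thread (A : {set T}) c x vs w :
    thread e A x vs w -> c3_coloring (A :\: [set z in vs]) c ->
    c w \in reach (pairmap a x (rcons vs w)) (c x) ->
  exists c', c3_coloring A c'.
Proof.
elim: vs x c => [|v vs IHvs] x c.
  have -> : [set z in [::]] = set0 :> {set T} by apply/setP => z; rewrite !inE.
  by rewrite setD0 => _ cA _; exists c.
case=> /= /and3P[_ v_out uniq_vs] subA [v_adj links_vs] cB /mem_reach_cons[q xq wq].
have vA : v \in A by apply: subA; rewrite !inE eqxx orbT.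
have wv : (w == v) = false by apply: contraNF v_out => /eqP <-; rewrite mem_rcons mem_head.
apply: (IHvs v [eta c with v |-> q]); last by rewrite /= eqxx wv.
  split => //; first by rewrite /= v_out.
  by move=> z zs; apply: subA; rewrite inE zs orbT.
have -> : A :\: [set z in vs] = v |: (A :\: [set z in v :: vs]).
  apply/setP => z; rewrite !inE; case: eqP => [-> | _] //=.
  by rewrite vA andbT; apply: contraNN v_out; rewrite mem_rcons inE orbC => ->.
apply: c3_coloring_add => //; first by rewrite !inE eqxx.
move=> z; rewrite !inE negb_or => /andP[/andP[_ zvs] zA] vz.
case: (v_adj z zA vz) => [-> // | z_head].
have vs0 : vs = [::] by move: z_head zvs; case: (vs) => // v' vs' ->; rewrite mem_head.
rewrite vs0 in wq; rewrite vs0 /= in z_head; subst z.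
case/mem_reach_cons: wq => r qr; rewrite /= inE => /eqP ->.
by rewrite -edge_ok_sym.
Qed.

End Coloring.

Section Outerplanar.
Variables (T : finType) (e : rel T) (f : T -> nat) (A : {set T}).
Hypotheses (e_irr : irreflexive e) (e_sym : symmetric e) (f_inj : injective f).
Hypothesis noncrossing :
  forall x y u v, e x y -> e u v -> ~~ ((f x < f u) && (f u < f y) && (f y < f v)).

Definition inside (u v : T) : {set T} := [set z in A | f u < f z < f v].

Definition consecutive (u v : T) : bool := (f u < f v) && (inside u v == set0).

Lemma in_inside u v z : (z \in inside u v) = (z \in A) && (f u < f z < f v).
Proof. by rewrite inE. Qed.

Lemma f_lt_neq u v : f u < f v -> u != v.
Proof. by apply: contraTneq => ->; rewrite ltnn. Qed.

Lemma consecutive_lt u v : consecutive u v -> f u < f v.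
Proof. by case/andP. Qed.

Lemma consecutive_gap u v z : consecutive u v -> z \in A -> f u < f z -> f z < f v -> False.
Proof.
by case/andP=> _ /eqP uv0 zA uz zv; have := in_set0 z; rewrite -uv0 in_inside zA uz zv.
Qed.

Lemma consecutive_inj_l t p w : t \in A -> p \in A ->
  consecutive t w -> consecutive p w -> t = p.
Proof.
move=> tA pA tw pw; apply: f_inj; case: (ltngtP (f t) (f p)) => // [tp | pt].
- by case: (consecutive_gap tw pA tp (consecutive_lt pw)).
- by case: (consecutive_gap pw tA pt (consecutive_lt tw)).
Qed.

Lemma consecutive_inj_r w t p : t \in A -> p \in A ->
  consecutive w t -> consecutive w p -> t = p.
Proof.
move=> tA pA wt wp; apply: f_inj; case: (ltngtP (f t) (f p)) => // [tp | pt].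
- by case: (consecutive_gap wp tA (consecutive_lt wt) tp).
- by case: (consecutive_gap wt pA (consecutive_lt wp) pt).
Qed.

Lemma inside_closed x y z t : e x y -> z \in inside x y -> e z t -> f x <= f t <= f y.
Proof.
rewrite in_inside => exy /and3P[_ xz zy] zt; apply/andP; split; rewrite leqNgt.
- have tz : e t z by rewrite e_sym.
  by apply/negP => tx; have := noncrossing tz exy; rewrite tx xz zy.
- by apply/negP => yt; have := noncrossing exy zt; rewrite xz zy yt.
Qed.

Lemma inside_sub u v : {subset inside u v <= A}.
Proof. by move=> z; rewrite in_inside => /andP[]. Qed.

Lemma inside_consecutive x y w q : w \in inside x y -> consecutive w q -> q \in A ->
  f q <= f y -> q != y -> q \in inside x y.
Proof.
rewrite !in_inside => /and3P[_ xw _] /consecutive_lt wq qA qy q_ne.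
by rewrite qA (ltn_trans xw wq) ltn_neqAle (inj_eq f_inj) q_ne qy.
Qed.

Hypothesis two_nbrs :
  forall v, v \in A -> exists z1 z2, [/\ z1 \in A, z2 \in A, z1 != z2, e v z1 & e v z2].

Definition innermost (x y : T) : Prop :=
  forall p q, p \in A -> q \in A -> e p q -> f x <= f p -> f p < f q -> f q <= f y ->
  (p != x) || (q != y) -> consecutive p q.

Section Innermost.
Variables x y : T.
Hypotheses (exy : e x y) (xy_innermost : innermost x y).

Lemma innermost_nbr w p t : w \in inside x y -> p \in A -> f x <= f p -> consecutive p w ->
  t \in A -> e w t -> t = p \/ consecutive w t /\ f t <= f y.
Proof.
move=> w_in pA xp pw tA wt; have /andP[xt ty] := inside_closed exy w_in wt.
move: (w_in); rewrite in_inside => /and3P[wA xw wy].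
case: (ltngtP (f t) (f w)) => [tw | wt' | /f_inj tw].
- left; apply: (consecutive_inj_l tA pA _ pw).
  by apply: xy_innermost; rewrite 1?e_sym ?(ltnW wy) ?(f_lt_neq wy) ?orbT.
- right; split=> //; apply: xy_innermost; rewrite ?(ltnW xw) //.
  by rewrite eq_sym (f_lt_neq xw).
- by rewrite tw e_irr in wt.
Qed.

Lemma innermost_next w p : w \in inside x y -> p \in A -> f x <= f p -> consecutive p w ->
  exists2 q, q \in A & [/\ consecutive w q, f q <= f y, e w p, e w q & adj_only e A w p q].
Proof.
move=> w_in pA xp pw; have nbr := innermost_nbr w_in pA xp pw.
have [|z1 [z2 [z1A z2A z12 wz1 wz2]]] := two_nbrs (v := w).
  by move: w_in; rewrite in_inside => /andP[].
case: (nbr _ z1A wz1) => [z1p | [wz1' z1y]]; case: (nbr _ z2A wz2) => [z2p | [wz2' z2y]].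
- by rewrite z1p z2p eqxx in z12.
- exists z2 => //; split=> //; first by rewrite -z1p.
  move=> t tA wt; case: (nbr _ tA wt) => [|[wt' _]]; first by left.
  by right; apply: consecutive_inj_r tA z2A wt' wz2'.
- exists z1 => //; split=> //; first by rewrite -z2p.
  move=> t tA wt; case: (nbr _ tA wt) => [|[wt' _]]; first by left.
  by right; apply: consecutive_inj_r tA z1A wt' wz1'.
- by rewrite (consecutive_inj_r z1A z2A wz1' wz2') eqxx in z12.
Qed.

End Innermost.

Lemma innermost_exists : A != set0 ->
  exists x y, [/\ x \in A, y \in A, e x y, inside x y != set0 & innermost x y].
Proof.
move=> /set0Pn[a0 a0A].
pose chord (xy : T * T) := [&& xy.1 \in A, xy.2 \in A, e xy.1 xy.2 & inside xy.1 xy.2 != set0].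
have [xy0 chord_xy0] : exists xy, chord xy.
  have [v vA v_min] := arg_minnP f a0A; have {}vA : v \in A := vA.
  have [z1 [z2 [z1A z2A z12 vz1 vz2]]] := two_nbrs vA.
  have v_lt z : z \in A -> e v z -> f v < f z.
    move=> zA vz; rewrite ltn_neqAle v_min // andbT.
    by apply: contraTneq vz => /f_inj <-; rewrite e_irr.
  case: (ltngtP (f z1) (f z2)) => [lt12 | lt21 | /f_inj eq12]; last by rewrite eq12 eqxx in z12.
  - exists (v, z2); rewrite /chord /= vA z2A vz2; apply/set0Pn; exists z1.
    by rewrite in_inside z1A v_lt.
  - exists (v, z1); rewrite /chord /= vA z1A vz1; apply/set0Pn; exists z2.
    by rewrite in_inside z2A v_lt.
have [[x y] /and4P[xA yA exy xy_ne] xy_min] := arg_minnP (fun xy => f xy.2 - f xy.1) chord_xy0.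
exists x, y; split=> // p q pA qA pq xp pq_lt qy pq_neq; rewrite /consecutive pq_lt /=.
apply: contraT => pq_ne; have := xy_min (p, q); rewrite /chord /= pA qA pq pq_ne => /(_ isT).
have [z /andP[_ /andP[xz zy]]] : exists z, (z \in A) && (f x < f z < f y).
  by case/set0Pn: xy_ne => z; rewrite in_inside; exists z.
have : f x < f p \/ f q < f y.
  case/orP: pq_neq => neq; [left | right]; rewrite ltn_neqAle (inj_eq f_inj) ?xp ?qy andbT //.
  by rewrite eq_sym.
clear -pq_lt xp qy xz zy; lia.
Qed.

Lemma consecutive_exists x y : inside x y != set0 ->
  exists2 w, w \in inside x y & consecutive x w.
Proof.
case/set0Pn=> z0 z0_in; have [w w_in w_min] := arg_minnP f z0_in.
have {}w_in : w \in inside x y := w_in.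
exists w => //; move: (w_in); rewrite in_inside => /and3P[wA xw wy].
rewrite /consecutive xw; apply/eqP/setP => z; rewrite in_inside inE.
apply/negP => /and3P[zA xz zw].
have z_in : z \in inside x y by rewrite in_inside zA xz (ltn_trans zw wy).
by have := w_min z z_in; rewrite leqNgt zw.
Qed.

Hypothesis girth5 : girth_ge e 5.

Lemma f_sorted_uniq s : sorted (fun u v => f u < f v) s -> uniq s.
Proof. by apply: sorted_uniq => [v u w | u]; [apply: ltn_trans | apply: ltnn]. Qed.

Lemma thread_of_sorted x vs w :
    sorted (fun u v => f u < f v) (x :: rcons vs w) -> all (mem A) (x :: rcons vs w) ->
    links e A x vs w ->
  thread e A x vs w.
Proof. by move=> /f_sorted_uniq s_uniq /allP s_sub; split. Qed.

Lemma f_sorted_cycle_long s : sorted (fun u v => f u < f v) s -> 3 <= size s -> cycle e s -> 5 <= size s.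
Proof. by move/f_sorted_uniq; apply: girth5. Qed.

Lemma reducible_thread : A != set0 ->
  (exists x v1 v2 v3 v4 w, thread e A x [:: v1; v2; v3; v4] w) \/
  (exists x v1 v2 v3 y, e x y /\ thread e A x [:: v1; v2; v3] y).
Proof.
move=> A_ne; have [x [y [xA yA exy xy_ne xy_in]]] := innermost_exists A_ne.
have [w1 w1_in x_w1] := consecutive_exists xy_ne.
have next := innermost_next exy xy_in; have w1A := inside_sub w1_in.
have lt_x1 := consecutive_lt x_w1.
have [w2 w2A [w1_w2 w2y w1x w1w2 adj1]] := next _ _ w1_in xA (leqnn _) x_w1.
have lt_12 := consecutive_lt w1_w2.
have w2_in : w2 \in inside x y.
  apply: inside_consecutive w1_in w1_w2 w2A w2y _; apply/eqP => w2_y; rewrite {}w2_y in w1w2 lt_12.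
  have := @f_sorted_cycle_long [:: x; w1; y]; rewrite /= lt_x1 lt_12 e_sym w1x w1w2 e_sym exy.
  by move=> /(_ isT isT isT).
have [w3 w3A [w2_w3 w3y _ w2w3 adj2]] := next _ _ w2_in w1A (ltnW lt_x1) w1_w2.
have lt_23 := consecutive_lt w2_w3.
have w3_in : w3 \in inside x y.
  apply: inside_consecutive w2_in w2_w3 w3A w3y _; apply/eqP => w3_y; rewrite {}w3_y in w2w3 lt_23.
  have := @f_sorted_cycle_long [:: x; w1; w2; y].
  rewrite /= lt_x1 lt_12 lt_23 e_sym w1x w1w2 w2w3 e_sym exy.
  by move=> /(_ isT isT isT).
have [w4 w4A [w3_w4 w4y _ _ adj3]] :=
  next _ _ w3_in w2A (ltnW (ltn_trans lt_x1 lt_12)) w2_w3.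
have lt_34 := consecutive_lt w3_w4.
case: (eqVneq w4 y) => [w4_y | w4_ne].
  right; exists x, w1, w2, w3, y; split=> //; rewrite -w4_y in adj3 *.
  by apply: thread_of_sorted; rewrite /= ?lt_x1 ?lt_12 ?lt_23 ?lt_34 ?xA ?w1A ?w2A ?w3A ?w4A.
have w4_in := inside_consecutive w3_in w3_w4 w4A w4y w4_ne.
have [w5 w5A [w4_w5 _ _ _ adj4]] :=
  next _ _ w4_in w3A (ltnW (ltn_trans lt_x1 (ltn_trans lt_12 lt_23))) w3_w4.
left; exists x, w1, w2, w3, w4, w5; apply: thread_of_sorted => //=.
by rewrite lt_x1 lt_12 lt_23 lt_34 (consecutive_lt w4_w5).
by rewrite xA w1A w2A w3A w4A w5A.
Qed.

End Outerplanar.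

Lemma leaf_or_two_nbrs (T : finType) (e : rel T) (A : {set T}) :
  (exists2 v, v \in A & forall z1 z2, z1 \in A -> z2 \in A -> e v z1 -> e v z2 -> z1 = z2) \/
  (forall v, v \in A -> exists z1 z2, [/\ z1 \in A, z2 \in A, z1 != z2, e v z1 & e v z2]).
Proof.
case: (boolP [exists v in A, [forall z1 in A, forall z2 in A, e v z1 ==> e v z2 ==> (z1 == z2)]]).
  case/exists_inP => v vA /forall_inP v_leaf; left; exists v => // z1 z2 z1A z2A vz1 vz2.
  by apply/eqP; move/forall_inP: (v_leaf z1 z1A) => /(_ z2 z2A); rewrite vz1 vz2.
rewrite negb_exists_in => /forall_inP no_leaf; right => v vA.
move: (no_leaf v vA); rewrite negb_forall_in => /exists_inP[z1 z1A].
rewrite negb_forall_in => /exists_inP[z2 z2A]; rewrite !negb_imply => /and3P[vz1 vz2 z12].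
by exists z1, z2.
Qed.

Lemma c3_coloring_exists (T : finType) (e a : rel T) (A : {set T}) :
  in_O5 e -> orientation a e -> exists c, c3_coloring a A c.
Proof.
move=> [[e_irr e_sym] [[f [f_inj noncrossing]] girth5]] a_e.
have [n] := ubnP #|A|; elim: n A => // n IHn A; rewrite ltnS => A_n.
have IH (B : {set T}) : B \proper A -> exists c, c3_coloring a B c.
  by move=> BA; apply: IHn; apply: leq_trans (proper_card BA) A_n.
have IH_thread x vs w : thread e A x vs w -> vs != [::] ->
    exists c, c3_coloring a (A :\: [set z in vs]) c.
  case: vs => // v vs [_ sub _] _; apply: IH; apply/properP; split; first exact: subsetDl.
  by exists v; [apply: sub; rewrite !inE eqxx orbT | rewrite !inE eqxx].
case: (eqVneq A set0) => [-> | A_ne].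
  by exists (fun=> (ord0, false)) => x; rewrite inE.
case: (leaf_or_two_nbrs e A) => [[v vA v_leaf] | two_nbrs].
  have [c cA] := IH _ (properD1 vA).
  exact: (c3_coloring_add_leaf a_e vA v_leaf cA).
case: (reducible_thread e_irr e_sym f_inj noncrossing two_nbrs girth5 A_ne)
  => [[x [v1 [v2 [v3 [v4 [w th]]]]]] | [x [v1 [v2 [v3 [y [xy th]]]]]]].
  have [c cB] := IH_thread _ _ _ th isT.
  by apply: (c3_coloring_add_thread a_e th cB); apply: reach_size5.
have [c cB] := IH_thread _ _ _ th isT; have [xB yB] := thread_ends th.
apply: (c3_coloring_add_thread a_e th cB); apply: reach_size4_closed => //.
exact: (c3_coloring_edge_ok a_e cB xB yB xy).
Qed.

Lemma push_hom_of_c3_coloring (T : finType) (a : rel T) c :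
  c3_coloring a [set: T] c -> push_hom a C3.
Proof.
move=> cT; exists [set z | (c z).2], (fun z => (c z).1) => x y.
have := cT x y (in_setT x) (in_setT y); have := cT y x (in_setT y) (in_setT x).
by rewrite /push !inE /arc_ok [(c y).2 (+) _]addbC; case: ifP.
Qed.

Lemma C3_oriented : oriented_graph C3.
Proof.
split; first by case=> [[|[|[|//]]] ?].
by case=> [[|[|[|//]]] ?] [[|[|[|//]]] ?].
Qed.

Definition C5 : rel 'I_5 := fun i j => (j : nat) == i.+1 %% 5.

Definition C5u : rel 'I_5 := fun i j => C5 i j || C5 j i.

Lemma C5u_in_O5 : in_O5 C5u.
Proof.
split; [split | split].
- by case=> [[|[|[|[|[|//]]]]] ?].
- by move=> i j; rewrite /C5u orbC.
- exists val; split; first exact: val_inj.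
  by do 4!case=> [[|[|[|[|[|//]]]]] ?].
- case=> [|x [|y [|z [|u [|v s]]]]] //.
    by move: x y z; do 3!case=> [[|[|[|[|[|//]]]]] ?].
  by move: x y z u; do 4!case=> [[|[|[|[|[|//]]]]] ?].
Qed.

Lemma C5_orients_C5u : orientation C5 C5u.
Proof.
split=> //; split; first by case=> [[|[|[|[|[|//]]]]] ?].
by do 2!case=> [[|[|[|[|[|//]]]]] ?].
Qed.

Lemma push_hom_C3 (T : finType) (e a : rel T) : in_O5 e -> orientation a e -> push_hom a C3.
Proof.
move=> e_O5 a_e; have [c cT] := c3_coloring_exists [set: T] e_O5 a_e.
exact: push_hom_of_c3_coloring cT.
Qed.

Lemma push_hom_arc_neq (T U : finType) (a : rel T) (b : rel U) S phi x y :
  irreflexive b -> hom (push a S) b phi -> a x y -> phi x != phi y.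
Proof.
move=> b_irr hom_phi xy.
have [] : push a S x y \/ push a S y x by rewrite /push addbC; case: ifP; [right | left].
all: by move=> /hom_phi; apply: contraTneq => ->; rewrite b_irr.
Qed.

Lemma C5_not_bipartite (phi : 'I_5 -> 'I_2) : ~ (forall i j, C5 i j -> phi i != phi j).
Proof.
move=> phi_proper; pose k i (lt_i5 : i < 5) := Ordinal lt_i5.
have ord2_eq (u v w : 'I_2) : u != v -> v != w -> u = w.
  by case: u v w => [[|[|//]] ?] [[|[|//]] ?] [[|[|//]] ?] //= _ _; apply: val_inj.
have e02 := ord2_eq _ _ _ (phi_proper (k 0 isT) (k 1 isT) isT)
                          (phi_proper (k 1 isT) (k 2 isT) isT).
have e24 := ord2_eq _ _ _ (phi_proper (k 2 isT) (k 3 isT) isT)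
                          (phi_proper (k 3 isT) (k 4 isT) isT).
by have := phi_proper (k 4 isT) (k 0 isT) isT; rewrite -e24 -e02 eqxx.
Qed.

Lemma C5_push_chromatic_number : push_chromatic_number C5 3.
Proof.
split.
  exists C3; split; first exact: C3_oriented.
  exact: push_hom_C3 C5u_in_O5 C5_orients_C5u.
move=> n n_lt3 [H [[H_irr _] [S [phi hom_phi]]]].
apply: (C5_not_bipartite (phi := widen_ord (n_lt3 : n <= 2) \o phi)) => i j ij /=.
by apply: contraNneq (push_hom_arc_neq H_irr hom_phi ij) => /(congr1 val) /= /val_inj ->.
Qed.

Theorem theorem2 :
  (forall (T : finType) (e a : rel T), in_O5 e -> orientation a e ->
     push_hom a C3) /\
  family_push_chromatic_number in_O5 3.
Proof.
split; first exact: push_hom_C3.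
split.
  move=> T e a e_O5 a_e; exists C3; split; first exact: C3_oriented.
  exact: push_hom_C3 e_O5 a_e.
exists 'I_5, C5u, C5; split; first exact: C5u_in_O5.
by split; [exact: C5_orients_C5u | exact: C5_push_chromatic_number].
Qed.
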